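(* Let $\Psi:\mathbb{R}^n\to\mathbb{R}$ be convex and twice continuously differentiable, let $s:\mathbb{R}^n\to\mathbb{R}^m$ ($m\ge n$) have continuously differentiable component functions with Jacobian $J(x)\in\mathbb{R}^{m\times n}$, let $b\in\mathbb{R}^m$, $\sigma>0$, and $c(x)=\frac12\|s(x)-b\|^2-\frac{\sigma^2}{2}$, so $\nabla c(x)=J(x)^T(s(x)-b)$. Let $x^*\in\mathbb{R}^n$ and $\rho>0$ be such that for every $x$ in the open ball $\mathcal{B}_\rho(x^* )$ there exists $(p,\lambda)\in\mathbb{R}^n\times\mathbb{R}$, $\lambda>0$, solving $$\nabla\Psi(x+p)+\lambda\big(\nabla c(x)+J(x)^TJ(x)p\big)=0,\qquad c(x)+\nabla c(x)^Tp+\tfrac12 p^TJ(x)^TJ(x)p=0. \quad ( * )$$ Then for every $x\in\mathcal{B}_\rho(x^* )$, with $(p,\lambda)$ a solution of $( * )$ at $x$, there exists a constant $\phi>0$ such that for all $\beta\in[0,1]$ $$\Psi(x+\beta p)-\Psi(x)\le-\frac{\beta\lambda}{2}p^TJ(x)^TJ(x)p+\lambda\beta c(x)+\phi\beta^2\|p\|^2.$$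
   Context: $\|\cdot\|$ is the Euclidean norm. Such $x^*,\rho$ exist e.g. near a KKT point $(x^*,\lambda^* )$ with $\lambda^*>0$, $\nabla c(x^* )\ne0$ and $\nabla^2\Psi(x^* )+\lambda^*J(x^* )^TJ(x^* )$ positive definite. *)

From HB Require Import structures.
From mathcomp Require Import all_boot all_order all_algebra.
From mathcomp Require Import all_classical all_reals all_analysis.
Set Implicit Arguments. Unset Strict Implicit. Unset Printing Implicit Defensive.
Import Order.TTheory GRing.Theory Num.Theory.
Import numFieldNormedType.Exports.
Local Open Scope ring_scope.

Section Defs.
Variable R : realType.

Definition evec (n : nat) (j : 'I_n) : 'cV[R]_n := delta_mx j 0.

Definition dotv (n : nat) (u v : 'cV[R]_n) : R := (u^T *m v) 0 0.
Definition enorm (n : nat) (v : 'cV[R]_n) : R := Num.sqrt (dotv v v).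

Definition grad (n : nat) (f : 'cV[R]_n -> R) (x : 'cV[R]_n) : 'cV[R]_n :=
  \col_i ('D_(evec i) f x).

Definition jacobian (n m : nat) (s : 'cV[R]_n -> 'cV[R]_m) (x : 'cV[R]_n)
  : 'M[R]_(m, n) :=
  \matrix_(i, j) 'D_(evec j) (fun y => s y i 0) x.

Definition C1 (n : nat) (f : 'cV[R]_n -> R) : Prop :=
  (forall x, differentiable f x) /\
  (forall j : 'I_n, continuous (fun x => 'D_(evec j) f x)).

Definition C2 (n : nat) (f : 'cV[R]_n -> R) : Prop :=
  C1 f /\ forall i : 'I_n, C1 (fun x => grad f x i 0).

Definition convex_fun (n : nat) (f : 'cV[R]_n -> R) : Prop :=
  forall (x y : 'cV[R]_n) (t : R), 0 <= t <= 1 ->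
    f (t *: x + (1 - t) *: y) <= t * f x + (1 - t) * f y.

Definition cfun (n m : nat) (s : 'cV[R]_n -> 'cV[R]_m) (b : 'cV[R]_m) (sigma : R)
  (x : 'cV[R]_n) : R :=
  dotv (s x - b) (s x - b) / 2 - sigma ^+ 2 / 2.

Definition gradc (n m : nat) (s : 'cV[R]_n -> 'cV[R]_m) (b : 'cV[R]_m)
  (x : 'cV[R]_n) : 'cV[R]_n :=
  (jacobian s x)^T *m (s x - b).

Definition JtJ (n m : nat) (s : 'cV[R]_n -> 'cV[R]_m) (x : 'cV[R]_n) : 'M[R]_n :=
  (jacobian s x)^T *m jacobian s x.

Definition solves_star (n m : nat) (Psi : 'cV[R]_n -> R) (s : 'cV[R]_n -> 'cV[R]_m)
  (b : 'cV[R]_m) (sigma : R) (x p : 'cV[R]_n) (lam : R) : Prop :=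
  grad Psi (x + p) + lam *: (gradc s b x + JtJ s x *m p) = 0 /\
  cfun s b sigma x + dotv (gradc s b x) p + dotv p (JtJ s x *m p) / 2 = 0.

End Defs.

(* Convexity along the segment from x to x + p gives
   Psi(x + beta p) - Psi(x) <= beta (Psi(x + p) - Psi(x)) <= beta grad Psi(x + p)^T p,
   the second step being the gradient inequality at x + p.  The first equation of
   the system turns grad Psi(x + p)^T p into -lam (grad c(x)^T p + p^T J^T J p), and
   the second one rewrites this as lam (c(x) - p^T J^T J p / 2).  Hence the claimed
   bound holds with any phi > 0: the term phi beta^2 ||p||^2 is pure slack. *)
From HB Require Import structures.
From mathcomp Require Import all_boot all_order all_algebra.
From mathcomp Require Import all_classical all_reals all_analysis.
From mathcomp Require Import ring lra.

Set Implicit Arguments.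
Unset Strict Implicit.
Unset Printing Implicit Defensive.
Import Order.TTheory GRing.Theory Num.Theory.
Import numFieldNormedType.Exports.
Local Open Scope ring_scope.
Local Open Scope classical_set_scope.

Section ConvexGradient.
Variables (R : realType) (n : nat).
Implicit Types (f : 'cV[R]_n -> R) (x y z d : 'cV[R]_n).

Lemma dotvE (u v : 'cV[R]_n) : dotv u v = \sum_k u k 0 * v k 0.
Proof. by rewrite /dotv mxE; apply: eq_bigr => k _; rewrite mxE. Qed.

Lemma dotv_grad f y d : differentiable f y -> dotv (grad f y) d = 'D_d f y.
Proof.
move=> df; rewrite dotvE (deriveE _ df) [in RHS](matrix_sum_delta d).
under [in RHS]eq_bigr do rewrite big_ord1.
rewrite linear_sum; apply: eq_bigr => k _.
by rewrite linearZ /= mxE -deriveE // mulrC.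
Qed.

Lemma convex_chord_le f x d (beta : R) : convex_fun f -> 0 <= beta <= 1 ->
  f (x + beta *: d) - f x <= beta * (f (x + d) - f x).
Proof.
move=> cf beta01; have := cf (x + d) x beta beta01.
have -> : beta *: (x + d) + (1 - beta) *: x = x + beta *: d.
  by rewrite scalerDr scalerBl scale1r addrC addrA subrK addrC.
by move=> ?; lra.
Qed.

Lemma convex_derive_le f y d : convex_fun f -> derivable f y d ->
  'D_d f y <= f (y + d) - f y.
Proof.
move=> cf /cvg_ex[l dl]; rewrite /derive (cvg_lim _ dl) //.
move: dl; set q := (fun h : R => h^-1 *: _) => dl.
have dl_right : q @ 0^'+ --> l.
  move=> A /dl /nbhs_ballP [_ /posnumP[e] eA].
  by exists e%:num => //= h eh /gt_eqF/negbT/eA; exact.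
apply: (cvgr_to_le dl_right); exists 1 => //= h h1 h0.
have h01 : 0 <= h <= 1.
  by move: h1; rewrite /ball /= sub0r normrN gtr0_norm // => /ltW ->; rewrite ltW.
rewrite /q /= /shift [_ *: _]mulrC ler_pdivrMr // [h *: d + y]addrC mulrC.
exact: convex_chord_le.
Qed.

Lemma convex_grad_le f y z : convex_fun f -> differentiable f y ->
  f y - f z <= dotv (grad f y) (y - z).
Proof.
move=> cf df; rewrite dotv_grad //.
have := convex_derive_le cf (@diff_derivable _ _ _ _ _ (z - y) df).
rewrite [y + _]addrC subrK -[y - z]opprB !(deriveE _ df) linearN /=; lra.
Qed.

End ConvexGradient.

Lemma solves_star_grad_dotv (R : realType) (n m : nat) (Psi : 'cV[R]_n -> R)
    (s : 'cV[R]_n -> 'cV[R]_m) (b : 'cV[R]_m) (sigma : R) (x p : 'cV[R]_n) (lam : R) :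
  solves_star Psi s b sigma x p lam ->
  dotv (grad Psi (x + p)) p =
    lam * (cfun s b sigma x - dotv p (JtJ s x *m p) / 2).
Proof.
set g := gradc s b x; set Hp := JtJ s x *m p.
move=> [/eqP gradE cE].
have -> : grad Psi (x + p) = - (lam *: (g + Hp)) by apply/eqP; rewrite -addr_eq0.
have -> : dotv (- (lam *: (g + Hp))) p = - lam * (dotv g p + dotv p Hp).
  rewrite !dotvE mulrDr !mulr_sumr -big_split /=; apply: eq_bigr => k _.
  by rewrite !mxE; ring.
have -> : dotv g p = - cfun s b sigma x - dotv p Hp / 2 by lra.
by field.
Qed.

Theorem lemma4 (R : realType) (n m : nat) (Psi : 'cV[R]_n -> R)
  (s : 'cV[R]_n -> 'cV[R]_m) (b : 'cV[R]_m) (sigma : R)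
  (xstar : 'cV[R]_n) (rho : R) :
  (n <= m)%N ->
  convex_fun Psi -> C2 Psi ->
  (forall i : 'I_m, C1 (fun x => s x i 0)) ->
  0 < sigma -> 0 < rho ->
  (forall x, enorm (x - xstar) < rho ->
     exists p lam, 0 < lam /\ solves_star Psi s b sigma x p lam) ->
  forall x, enorm (x - xstar) < rho ->
  forall (p : 'cV[R]_n) (lam : R), 0 < lam -> solves_star Psi s b sigma x p lam ->
  exists phi : R, 0 < phi /\
    forall beta : R, 0 <= beta <= 1 ->
      Psi (x + beta *: p) - Psi x <=
        - (beta * lam / 2) * dotv p (JtJ s x *m p)
        + lam * beta * cfun s b sigma x
        + phi * beta ^+ 2 * enorm p ^+ 2.
Proof.
move=> _ cvx [[dPsi _] _] _ _ _ _ x _ p lam _ star.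
exists 1; split => // beta beta01; case/andP: (beta01) => beta0 _.
have := convex_grad_le x cvx (dPsi (x + p)).
rewrite [x + p - x]addrC addKr (solves_star_grad_dotv star) => descent.
apply: le_trans (convex_chord_le x p cvx beta01) _.
apply: le_trans (ler_wpM2l beta0 descent) _.
have -> : - (beta * lam / 2) * dotv p (JtJ s x *m p) + lam * beta * cfun s b sigma x
    = beta * (lam * (cfun s b sigma x - dotv p (JtJ s x *m p) / 2)) by ring.
by rewrite lerDl mul1r mulr_ge0 ?sqr_ge0.
Qed.
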